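(* Let $X$ be a real Banach space, $Y$ an injective real Banach space, and $\mathcal{D}$ a closed subspace of $F_Y(X)$. Then the quotient space $Lip_0(X,Y)/{}^{\diamondsuit}\mathcal{D}$ is linearly isometrically isomorphic to $L(\mathcal{D},Y)$, via $f+{}^{\diamondsuit}\mathcal{D}\mapsto(\gamma\mapsto\gamma(f))$.
   Context: $Lip_0(X,Y)$ is the Banach space of Lipschitz maps $f:X\to Y$ with $f(0)=0$ and norm $Lip(f)=\sup_{x\neq y}\|f(x)-f(y)\|/\|x-y\|$. For $x\in X$, $\delta_x^Y\in L(Lip_0(X,Y),Y)$ is evaluation $\delta_x^Y(f)=f(x)$. $F_Y(X)$ is the norm-closed linear span of $\{\delta_x^Y:x\in X\}$ in $L(Lip_0(X,Y),Y)$. For $\mathcal{D}\subset F_Y(X)$, ${}^{\diamondsuit}\mathcal{D}=\{f\in Lip_0(X,Y):\gamma(f)=0\ \forall\gamma\in\mathcal{D}\}$, a closed subspace. $Y$ injective means: every bounded linear operator from a closed subspace of a Banach space into $Y$ extends to a bounded linear operator on the whole space with the same norm. *)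

From HB Require Import structures.
From mathcomp Require Import all_boot all_order all_algebra.
From mathcomp Require Import all_classical all_reals all_analysis.
Set Implicit Arguments. Unset Strict Implicit. Unset Printing Implicit Defensive.
Import Order.TTheory GRing.Theory Num.Theory.
Import numFieldNormedType.Exports.
Local Open Scope classical_set_scope.
Local Open Scope ring_scope.

(* Real Banach spaces are modelled as [completeNormedModType R], R : realType. *)

Section Defs.
Variable R : realType.

(* Operator norm (in \bar R, value +oo if unbounded) of T : Z -> Y on the
   unit ball of a subset S of Z; sup of the empty set is taken to be 0. *)
Definition opnorm_on (Z Y : normedModType R) (S : set Z) (T : Z -> Y) : \bar R :=
  ereal_sup ([set 0%E] `|` [set ((`|T z|)%:E) | z in S `&` [set z | `|z| <= 1]]).

Definition linear_on (Z Y : normedModType R) (S : set Z) (T : Z -> Y) : Prop :=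
  forall (a : R) (z1 z2 : Z), S z1 -> S z2 -> T (a *: z1 + z2) = a *: T z1 + T z2.

Definition lin_subspace (Z : normedModType R) (S : set Z) : Prop :=
  S 0 /\ forall (a : R) (z1 z2 : Z), S z1 -> S z2 -> S (a *: z1 + z2).

Definition injective_space (Y : normedModType R) : Prop :=
  forall (Z : completeNormedModType R) (S : set Z),
    lin_subspace S -> closed S ->
    forall T : Z -> Y, linear_on S T -> (opnorm_on S T < +oo)%E ->
    exists U : Z -> Y, linear_on setT U /\ (forall z, S z -> U z = T z) /\
      opnorm_on setT U = opnorm_on S T.

Variables (X Y : normedModType R).

Definition lipc (f : X -> Y) : \bar R :=
  ereal_sup ([set 0%E] `|` [set z | exists x y : X, x != y /\
     z = ((`|f x - f y| / `|x - y|)%:E)]).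

Definition Lip0 : set (X -> Y) := [set f | f 0 = 0 /\ (lipc f < +oo)%E].

(* Elements of L(Lip_0(X,Y),Y) are represented as maps (X -> Y) -> Y; only
   their values on Lip0 matter. Operator norm w.r.t. the norm Lip: *)
Definition gnorm (g : (X -> Y) -> Y) : \bar R :=
  ereal_sup ([set 0%E] `|` [set ((`|g f|)%:E) | f in Lip0 `&` [set f | (lipc f <= 1)%E]]).

Definition in_LLip (g : (X -> Y) -> Y) : Prop :=
  (forall (a : R) f1 f2, Lip0 f1 -> Lip0 f2 ->
     g (fun x => a *: f1 x + f2 x) = a *: g f1 + g f2) /\ (gnorm g < +oo)%E.

Definition delta (x : X) : (X -> Y) -> Y := fun f => f x.

Definition delta_comb (s : seq (R * X)) : (X -> Y) -> Y :=
  fun f => \sum_(p <- s) p.1 *: delta p.2 f.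

Definition FY : set ((X -> Y) -> Y) :=
  [set g | in_LLip g /\ forall e : R, 0 < e ->
     exists s : seq (R * X), (gnorm (fun f => (g f - delta_comb s f)%R) <= e%:E)%E].

Definition closed_subspace_FY (D : set ((X -> Y) -> Y)) : Prop :=
  D `<=` FY /\ D (fun _ => 0) /\
  (forall (a : R) g1 g2, D g1 -> D g2 -> D (fun f => a *: g1 f + g2 f)) /\
  (forall g, FY g -> (forall e : R, 0 < e ->
      exists g', D g' /\ (gnorm (fun f => (g f - g' f)%R) <= e%:E)%E) -> D g).

Definition preannih (D : set ((X -> Y) -> Y)) : set (X -> Y) :=
  [set f | Lip0 f /\ forall g, D g -> g f = 0].

Definition qnorm (D : set ((X -> Y) -> Y)) (f : X -> Y) : \bar R :=
  ereal_inf [set lipc (fun x => f x - h x) | h in preannih D].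

Definition LDnorm (D : set ((X -> Y) -> Y)) (T : ((X -> Y) -> Y) -> Y) : \bar R :=
  ereal_sup ([set 0%E] `|` [set ((`|T g|)%:E) | g in D `&` [set g | (gnorm g <= 1)%E]]).

Definition in_LD (D : set ((X -> Y) -> Y)) (T : ((X -> Y) -> Y) -> Y) : Prop :=
  (forall (a : R) g1 g2, D g1 -> D g2 ->
     T (fun f => a *: g1 f + g2 f) = a *: T g1 + T g2) /\ (LDnorm D T < +oo)%E.

End Defs.

From HB Require Import structures.
From mathcomp Require Import all_boot all_order all_algebra.
From mathcomp Require Import all_classical all_reals all_analysis.
From mathcomp Require Import ring lra.
Import Order.TTheory GRing.Theory Num.Theory.
Import numFieldNormedType.Exports.
Local Open Scope classical_set_scope.
Local Open Scope ring_scope.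
Set Implicit Arguments. Unset Strict Implicit. Unset Printing Implicit Defensive.

(* The functionals of F_Y(X), normalised to vanish off Lip_0(X,Y), form a
   Banach space Z for the dual Lipschitz norm, in which the evaluations
   delta_x span a dense subspace and x |-> delta_x is 1-Lipschitz.  Hence a
   bounded operator U : Z -> Y is evaluation at the Lipschitz map
   x |-> U delta_x, whose Lipschitz constant is at most ||U||.  Given
   T in L(D,Y), injectivity of Y extends T, read on the closed subspace of Z
   corresponding to D, to such a U of the same norm: this gives f with
   T = Phi(f) and Lip(f) <= ||T||, i.e. surjectivity of Phi and, for
   T = Phi(f), the bound ||f + ^D|| <= ||Phi(f)||.  The reverse bound is
   |gamma(f)| = |gamma(f - h)| <= ||gamma|| Lip(f - h) for h in ^D. *)

Lemma ler_homogeneous_bound (R : realFieldType) (a b M : R) : 0 <= b ->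
  (forall c, 0 < c -> c * b <= 1 -> c * a <= M) -> a <= M * b.
Proof.
rewrite le_eqVlt => /predU1P[<- scaled|b_gt0 scaled].
  rewrite mulr0 leNgt; apply/negP => a_gt0.
  have c_gt0 : 0 < (`|M| + 1) / a by rewrite divr_gt0 // ltr_pwDr.
  have := scaled _ c_gt0; rewrite mulr0 ler01 divfK ?gt_eqF // => /(_ isT).
  by apply/negP; rewrite -ltNge; apply: le_lt_trans (ler_norm M) _; rewrite ltrDl.
have := scaled b^-1; rewrite invr_gt0 mulVf ?gt_eqF // lexx => /(_ b_gt0 isT).
by rewrite mulrC ler_pdivrMr.
Qed.

Lemma le0_of_le_scaled (R : realFieldType) (x c : R) :
  (forall e, 0 < e -> x <= c * e) -> x <= 0.
Proof.
move=> x_small; rewrite -(mulr0 `|c|); apply: ler_homogeneous_bound => // e e_gt0 _.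
have x_le : x <= c * e^-1 by apply: x_small; rewrite invr_gt0.
apply: le_trans (ler_wpM2l (ltW e_gt0) x_le) _.
by rewrite mulrCA divff ?gt_eqF // mulr1 ler_norm.
Qed.

Section Lipschitz.
Variables (R : realType) (X Y : normedModType R).
Implicit Types (f : X -> Y) (L : R).

Lemma lipschitzP f L : L.-lipschitz f <-> forall x y, `|f x - f y| <= L * `|x - y|.
Proof. by split=> [lipf x y | lipf [x y] _]; [apply: (lipf (x, y)) | apply: lipf]. Qed.

Lemma lipc_ge0 f : (0 <= lipc f)%E.
Proof. by apply: le_ereal_sup_tmp; exists 0%E => //; left. Qed.

Lemma lipc_le f L : 0 <= L -> (lipc f <= L%:E)%E <-> L.-lipschitz f.
Proof.
move=> L_ge0; split.
- move=> lipfL; apply/lipschitzP => x y.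
  have [->|xy] := eqVneq x y; first by rewrite !subrr !normr0 mulr0.
  have : ((`|f x - f y| / `|x - y|)%:E <= lipc f)%E.
    by apply: le_ereal_sup_tmp; eexists => //; right; exists x, y.
  by move=> /le_trans /(_ lipfL); rewrite lee_fin ler_pdivrMr ?normr_gt0 ?subr_eq0.
- move=> /lipschitzP lipfL; apply: ge_ereal_sup => _ [->|[x [y [xy ->]]]]; first by rewrite lee_fin.
  by rewrite lee_fin ler_pdivrMr ?normr_gt0 ?subr_eq0.
Qed.

Definition lipconst f : R := fine (lipc f).

Lemma lipconst_ge0 f : 0 <= lipconst f.
Proof. exact/fine_ge0/lipc_ge0. Qed.

Lemma Lip0_lipcE f : Lip0 f -> lipc f = (lipconst f)%:E.
Proof. by move=> [_ lipf_fin]; rewrite fineK // ge0_fin_numE // lipc_ge0. Qed.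

Lemma Lip0_lipschitz f : Lip0 f -> (lipconst f).-lipschitz f.
Proof. by move=> Lf; apply/lipc_le; rewrite ?lipconst_ge0 ?Lip0_lipcE. Qed.

Lemma Lip0_of_lipschitz f L : 0 <= L -> f 0 = 0 -> L.-lipschitz f -> Lip0 f.
Proof.
move=> L_ge0 f0 lipfL; split => //.
by apply: le_lt_trans (ltry L); apply/lipc_le.
Qed.

Lemma lipschitz_comb (f1 f2 : X -> Y) (a L1 L2 : R) :
  L1.-lipschitz f1 -> L2.-lipschitz f2 ->
  (`|a| * L1 + L2).-lipschitz (fun x => a *: f1 x + f2 x).
Proof.
move=> /lipschitzP lip1 /lipschitzP lip2; apply/lipschitzP => x y.
rewrite opprD addrACA -scalerBr mulrDl -mulrA.
apply: le_trans (ler_normD _ _) _; rewrite normrZ.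
by apply: lerD; [apply: ler_wpM2l|].
Qed.

Lemma Lip0_comb (f1 f2 : X -> Y) (a : R) : Lip0 f1 -> Lip0 f2 ->
  Lip0 (fun x => a *: f1 x + f2 x).
Proof.
move=> Lf1 Lf2; apply: (@Lip0_of_lipschitz _ (`|a| * lipconst f1 + lipconst f2)).
- by rewrite addr_ge0 ?mulr_ge0 ?lipconst_ge0.
- by rewrite Lf1.1 Lf2.1 scaler0 addr0.
- by apply: lipschitz_comb; apply: Lip0_lipschitz.
Qed.

Lemma lipschitz_cst0 : 0.-lipschitz (fun _ : X => (0 : Y)).
Proof. by apply/lipschitzP => x y; rewrite subrr normr0 mul0r. Qed.

Lemma Lip0_cst0 : Lip0 (fun _ : X => (0 : Y)).
Proof. exact: Lip0_of_lipschitz lipschitz_cst0. Qed.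

Lemma lipc_le1_norm f x y : (lipc f <= 1)%E -> `|f x - f y| <= `|x - y|.
Proof. by move=> /(lipc_le f ler01)/lipschitzP/(_ x y); rewrite mul1r. Qed.

Lemma Lip0B (f1 f2 : X -> Y) : Lip0 f1 -> Lip0 f2 -> Lip0 (fun x => f1 x - f2 x).
Proof.
move=> Lf1 Lf2; have := Lip0_comb (-1) Lf2 Lf1.
by congr Lip0; apply: funext => x; rewrite scaleN1r addrC.
Qed.

End Lipschitz.

Section Functionals.
Variables (R : realType) (X Y : normedModType R).
Implicit Types (g : (X -> Y) -> Y) (f : X -> Y).

Definition lin_on_Lip0 g := forall (a : R) f1 f2, Lip0 f1 -> Lip0 f2 ->
  g (fun x => a *: f1 x + f2 x) = a *: g f1 + g f2.

Lemma lin_on_Lip0_cst0 g : lin_on_Lip0 g -> g (fun _ => 0) = 0.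
Proof.
move=> glin; rewrite -[RHS](addNr (g (fun _ => 0))) -scaleN1r -glin; try exact: Lip0_cst0.
by congr g; apply: funext => x; rewrite scaler0 addr0.
Qed.

Lemma lin_on_Lip0Z g a f : lin_on_Lip0 g -> Lip0 f -> g (fun x => a *: f x + 0) = a *: g f.
Proof. by move=> glin Lf; rewrite glin ?lin_on_Lip0_cst0 ?addr0 //; apply: Lip0_cst0. Qed.

Lemma lin_on_Lip0B g f1 f2 : lin_on_Lip0 g -> Lip0 f1 -> Lip0 f2 ->
  g (fun x => f1 x - f2 x) = g f1 - g f2.
Proof.
move=> glin Lf1 Lf2; rewrite addrC -scaleN1r -glin //.
by congr g; apply: funext => x; rewrite scaleN1r addrC.
Qed.

Lemma gnorm_ge0 g : (0 <= gnorm g)%E.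
Proof. by apply: le_ereal_sup_tmp; exists 0%E => //; left. Qed.

Lemma gnorm_le g (M : R) : 0 <= M ->
  (gnorm g <= M%:E)%E <-> (forall f, Lip0 f -> (lipc f <= 1)%E -> `|g f| <= M).
Proof.
move=> M_ge0; split.
- move=> gM f Lf lipf; rewrite -lee_fin; apply: le_trans gM.
  by apply: le_ereal_sup_tmp; eexists => //; right; exists f.
- move=> gM; apply: ge_ereal_sup => _ [->|[f [Lf lipf] <-]]; first by rewrite lee_fin.
  by rewrite lee_fin gM.
Qed.

Lemma gnorm_cst0 : gnorm (fun _ : X -> Y => 0 : Y) = 0%E.
Proof. by apply/eqP; rewrite eq_le gnorm_ge0 andbT; apply/gnorm_le => // f _ _; rewrite normr0. Qed.

Lemma gnorm_lipschitz_bound g (M L : R) f : lin_on_Lip0 g -> (gnorm g <= M%:E)%E ->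
  Lip0 f -> 0 <= L -> L.-lipschitz f -> `|g f| <= M * L.
Proof.
move=> glin gM Lf L_ge0 lipfL; have M_ge0 : 0 <= M by rewrite -lee_fin (le_trans (gnorm_ge0 g)).
apply: ler_homogeneous_bound => // c c_gt0 cL.
have Lcf := Lip0_comb c Lf (Lip0_cst0 X Y).
have := (gnorm_le g M_ge0).1 gM _ Lcf.
rewrite lin_on_Lip0Z // normrZ gtr0_norm //; apply.
apply: le_trans (_ : _ <= (c * L + 0)%:E)%E _; last by rewrite addr0 lee_fin.
apply/lipc_le; first by rewrite addr0 mulr_ge0 // ltW.
by have := lipschitz_comb c lipfL (@lipschitz_cst0 _ X Y); rewrite gtr0_norm.
Qed.

End Functionals.

Section FreeSpace.
Variables (R : realType) (X Y : normedModType R).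
Implicit Types (g : (X -> Y) -> Y) (f : X -> Y).

Lemma FY_lin g : FY g -> lin_on_Lip0 g.
Proof. by case=> -[]. Qed.

Lemma gnorm_comb g1 g2 (a M1 M2 : R) : 0 <= M1 -> 0 <= M2 ->
  (gnorm g1 <= M1%:E)%E -> (gnorm g2 <= M2%:E)%E ->
  (gnorm (fun f => (a *: g1 f + g2 f)%R) <= (`|a| * M1 + M2)%:E)%E.
Proof.
move=> M1_ge0 M2_ge0 g1M1 g2M2; apply/gnorm_le; first by rewrite addr_ge0 ?mulr_ge0.
move=> f Lf lipf; apply: le_trans (ler_normD _ _) _; rewrite normrZ.
apply: lerD; last exact: (gnorm_le g2 M2_ge0).1 g2M2 f Lf lipf.
by apply: ler_wpM2l => //; apply: (gnorm_le g1 M1_ge0).1 g1M1 f Lf lipf.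
Qed.

Lemma gnorm_eq_on_Lip0 g1 g2 : (forall f, Lip0 f -> g1 f = g2 f) -> gnorm g1 = gnorm g2.
Proof.
move=> g12; rewrite /gnorm; congr (ereal_sup (_ `|` _)).
by apply/seteqP; split => _ [f Lf <-]; exists f => //; rewrite g12 //; case: Lf.
Qed.

Definition gnormr g : R := fine (gnorm g).

Lemma gnormr_ge0 g : 0 <= gnormr g.
Proof. exact/fine_ge0/gnorm_ge0. Qed.

Lemma gnormE g : (gnorm g < +oo)%E -> gnorm g = (gnormr g)%:E.
Proof. by move=> g_fin; rewrite fineK // ge0_fin_numE ?gnorm_ge0. Qed.

Lemma in_LLip_comb g1 g2 a : in_LLip g1 -> in_LLip g2 ->
  in_LLip (fun f => a *: g1 f + g2 f).
Proof.
move=> [lin1 fin1] [lin2 fin2]; split.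
  move=> b f1 f2 Lf1 Lf2; rewrite lin1 // lin2 //.
  by rewrite !scalerDr !scalerA [b * a]mulrC addrACA.
apply: le_lt_trans (ltry (`|a| * gnormr g1 + gnormr g2)).
by apply: gnorm_comb; rewrite ?gnormr_ge0 // gnormE.
Qed.

Lemma delta_comb_scale_cat (a : R) (s1 s2 : seq (R * X)) f :
  delta_comb ([seq (a * p.1, p.2) | p <- s1] ++ s2) f = a *: delta_comb s1 f + delta_comb s2 f.
Proof.
rewrite /delta_comb big_cat big_map scaler_sumr; congr (_ + _).
by apply: eq_bigr => p _ /=; rewrite scalerA.
Qed.

Lemma FY_comb g1 g2 a : FY g1 -> FY g2 -> FY (fun f => a *: g1 f + g2 f).
Proof.
move=> [LLg1 approx1] [LLg2 approx2]; split; first exact: in_LLip_comb.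
move=> e e_gt0; have a1_gt0 : 0 < `|a| + 1 by rewrite ltr_pwDr.
have e2_gt0 : 0 < e / 2 by rewrite divr_gt0.
have [s1 g1s1] := approx1 (e / 2 / (`|a| + 1)) (divr_gt0 e2_gt0 a1_gt0).
have [s2 g2s2] := approx2 (e / 2) e2_gt0.
exists ([seq (a * p.1, p.2) | p <- s1] ++ s2).
have -> : (fun f => a *: g1 f + g2 f - delta_comb ([seq (a * p.1, p.2) | p <- s1] ++ s2) f)
  = (fun f => a *: (g1 f - delta_comb s1 f) + (g2 f - delta_comb s2 f)).
  by apply: funext => f; rewrite delta_comb_scale_cat scalerBr opprD addrACA.
apply: le_trans (gnorm_comb a (ltW (divr_gt0 e2_gt0 a1_gt0)) (ltW e2_gt0) g1s1 g2s2) _.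
rewrite lee_fin [leRHS](splitr e) lerD2r mulrCA; apply: ler_piMr; first exact: ltW.
by rewrite ler_pdivrMr // mul1r lerDl.
Qed.

Lemma FY_cst0 : FY (fun _ : X -> Y => 0 : Y).
Proof.
split; first by split; [move=> a f1 f2 _ _; rewrite scaler0 addr0 | rewrite gnorm_cst0 ltry].
move=> e e_gt0; exists [::].
rewrite (gnorm_eq_on_Lip0 (g2 := fun _ => 0)) ?gnorm_cst0 ?lee_fin ?(ltW e_gt0) //.
by move=> f _; rewrite /delta_comb big_nil subrr.
Qed.

Lemma FY_eq_on_Lip0 g1 g2 : FY g1 -> (forall f, Lip0 f -> g1 f = g2 f) -> FY g2.
Proof.
move=> [[lin1 fin1] approx1] g12; split; first split.
- by move=> a f1 f2 Lf1 Lf2; rewrite -!g12 ?lin1 //; apply: Lip0_comb.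
- by rewrite -(gnorm_eq_on_Lip0 g12).
- move=> e e_gt0; have [s g1s] := approx1 e e_gt0; exists s.
  by rewrite -(gnorm_eq_on_Lip0 (g1 := fun f => g1 f - delta_comb s f)) // => f Lf; rewrite g12.
Qed.

Lemma FY_of_approx g : in_LLip g ->
  (forall e : R, 0 < e -> exists2 g', FY g' & (gnorm (fun f => (g f - g' f)%R) <= e%:E)%E) -> FY g.
Proof.
move=> LLg approx; split => // e e_gt0; have e2_gt0 : 0 < e / 2 by rewrite divr_gt0.
have [g' [_ approx'] gg'] := approx (e / 2) e2_gt0.
have [s g's] := approx' (e / 2) e2_gt0; exists s.
have -> : (fun f => g f - delta_comb s f) = (fun f => 1 *: (g f - g' f) + (g' f - delta_comb s f)).
  by apply: funext => f; rewrite scale1r addrA subrK.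
apply: le_trans (gnorm_comb 1 (ltW e2_gt0) (ltW e2_gt0) gg' g's) _.
by rewrite normr1 mul1r -splitr.
Qed.

Lemma FY_delta (x : X) : FY (@delta R X Y x).
Proof.
split; first split => //.
  apply: le_lt_trans (ltry `|x|); apply/gnorm_le => // f Lf lipf.
  by have := lipc_le1_norm x 0 lipf; rewrite /delta Lf.1 !subr0.
move=> e e_gt0; exists [:: (1, x)]; apply/gnorm_le; first exact: ltW.
by move=> f _ _; rewrite /delta_comb big_seq1 scale1r subrr normr0 ltW.
Qed.

End FreeSpace.

Section FYspace.
Variables (R : realType) (X Y : normedModType R).
Implicit Types (g : (X -> Y) -> Y) (f : X -> Y).

(* A functional on Lip_0(X,Y) is encoded by a map on all of X -> Y; requiring
   it to vanish off Lip_0(X,Y) makes the encoding unique, so that gnorm is a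
   norm on the resulting space. *)
Definition FY_rep g := FY g /\ forall f, ~ Lip0 f -> g f = 0.

Definition FY_rep_pred : {pred (X -> Y) -> Y} := fun g => `[< FY_rep g >].

Lemma FY_rep_submod_closed : GRing.submod_closed FY_rep_pred.
Proof.
split; first by apply/asboolP; split; [exact: FY_cst0|].
move=> a g1 g2 /asboolP[FYg1 g1_out] /asboolP[FYg2 g2_out]; apply/asboolP; split.
  exact: FY_comb.
by move=> f nLf; change (a *: g1 f + g2 f = 0); rewrite g1_out ?g2_out // scaler0 addr0.
Qed.

HB.instance Definition _ := GRing.isSubmodClosed.Build R _ FY_rep_pred FY_rep_submod_closed.

Record FYspace := FYSpace { fyval : (X -> Y) -> Y; fyvalP : fyval \in FY_rep_pred }.

HB.instance Definition _ := [isSub for fyval].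
HB.instance Definition _ := [Choice of FYspace by <:].
HB.instance Definition _ := [SubChoice_isSubLmodule of FYspace by <:].

Implicit Types z : FYspace.

Lemma fyval_rep z : FY_rep (fyval z).
Proof. exact/asboolP/(fyvalP z). Qed.

Lemma fyval_FY z : FY (fyval z).
Proof. exact: (fyval_rep z).1. Qed.

Lemma fyval_lin z : lin_on_Lip0 (fyval z).
Proof. exact/FY_lin/fyval_FY. Qed.

Lemma fyval_out z f : ~ Lip0 f -> fyval z f = 0.
Proof. exact: (fyval_rep z).2. Qed.

Lemma fyvalB z1 z2 f : fyval (z1 - z2) f = fyval z1 f - fyval z2 f.
Proof. by []. Qed.

Definition fynorm z : R := gnormr (fyval z).

Lemma gnorm_fyvalE z : gnorm (fyval z) = (fynorm z)%:E.
Proof. exact/gnormE/(fyval_FY z).1.2. Qed.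

Lemma fynorm_comb a z1 z2 : fynorm (a *: z1 + z2) <= `|a| * fynorm z1 + fynorm z2.
Proof. by rewrite -lee_fin -gnorm_fyvalE; apply: gnorm_comb; rewrite ?gnormr_ge0 ?gnorm_fyvalE. Qed.

Lemma fynorm0 : fynorm 0 = 0.
Proof.
apply/eqP; rewrite eq_le gnormr_ge0 andbT -lee_fin -gnorm_fyvalE.
by apply/gnorm_le => // f _ _; rewrite normr0.
Qed.

Lemma fynormD z1 z2 : fynorm (z1 + z2) <= fynorm z1 + fynorm z2.
Proof. by have := fynorm_comb 1 z1 z2; rewrite scale1r normr1 mul1r. Qed.

Lemma fynormZ a z : fynorm (a *: z) = `|a| * fynorm z.
Proof.
have fynormZ_le b z' : fynorm (b *: z') <= `|b| * fynorm z'.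
  by have := fynorm_comb b z' 0; rewrite !addr0 fynorm0 addr0.
apply/eqP; rewrite eq_le fynormZ_le /=.
have [->|a_neq0] := eqVneq a 0; first by rewrite normr0 mul0r gnormr_ge0.
have := fynormZ_le a^-1 (a *: z); rewrite scalerA mulVf // scale1r normfV.
by rewrite ler_pdivlMl ?normr_gt0.
Qed.

Lemma norm_fyval_le z f : Lip0 f -> `|fyval z f| <= fynorm z * lipconst f.
Proof.
move=> Lf; apply: gnorm_lipschitz_bound (fyval_lin z) _ Lf (lipconst_ge0 f) (Lip0_lipschitz Lf).
by rewrite gnorm_fyvalE.
Qed.

Lemma fynorm_eq0 z : fynorm z = 0 -> z = 0.
Proof.
move=> z0; apply: val_inj; apply: funext => f /=.
have [Lf|nLf] := pselect (Lip0 f); last by rewrite fyval_out.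
by apply/eqP; rewrite -normr_le0; have := norm_fyval_le z Lf; rewrite z0 mul0r.
Qed.

HB.instance Definition _ := Lmodule_isNormed.Build R FYspace fynormD fynormZ fynorm_eq0.

Lemma gnorm_fyval z : gnorm (fyval z) = `|z|%:E.
Proof. exact: gnorm_fyvalE. Qed.

Lemma fyval_dist z1 z2 f : Lip0 f -> `|fyval z1 f - fyval z2 f| <= `|z1 - z2| * lipconst f.
Proof. by rewrite -fyvalB; apply: norm_fyval_le. Qed.

End FYspace.

Section Deltas.
Variables (R : realType) (X Y : normedModType R).
Implicit Types (g : (X -> Y) -> Y) (f : X -> Y) (z : FYspace X Y).

Definition restrict_Lip0 g : (X -> Y) -> Y := fun f => if `[< Lip0 f >] then g f else 0.

Lemma restrict_Lip0_in g f : Lip0 f -> restrict_Lip0 g f = g f.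
Proof. by move=> Lf; rewrite /restrict_Lip0 asboolT. Qed.

Lemma FY_rep_restrict g : FY g -> restrict_Lip0 g \in @FY_rep_pred R X Y.
Proof.
move=> FYg; apply/asboolP; split.
  by apply: FY_eq_on_Lip0 FYg _ => f Lf; rewrite restrict_Lip0_in.
by move=> f nLf; rewrite /restrict_Lip0 asboolF.
Qed.

Definition fyrepr g (FYg : FY g) : FYspace X Y := FYSpace (FY_rep_restrict FYg).

Lemma fyreprE g (FYg : FY g) f : Lip0 f -> fyval (fyrepr FYg) f = g f.
Proof. exact: restrict_Lip0_in. Qed.

Definition fydelta (x : X) : FYspace X Y := fyrepr (FY_delta Y x).

Lemma fydeltaE x f : Lip0 f -> fyval (fydelta x) f = f x.
Proof. exact: fyreprE. Qed.

Lemma fydelta0 : fydelta 0 = 0.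
Proof.
apply: val_inj; apply: funext => f; change (fyval (fydelta 0) f = 0).
have [Lf|nLf] := pselect (Lip0 f); last by rewrite fyval_out.
by rewrite fydeltaE // Lf.1.
Qed.

Lemma fydelta_dist x y : `|fydelta x - fydelta y| <= `|x - y|.
Proof.
rewrite -lee_fin -gnorm_fyval; apply/gnorm_le => // f Lf lipf.
by rewrite fyvalB !fydeltaE // lipc_le1_norm.
Qed.

Fixpoint fycomb (s : seq (R * X)) : FYspace X Y :=
  if s is p :: s' then p.1 *: fydelta p.2 + fycomb s' else 0.

Lemma fycombE s f : Lip0 f -> fyval (fycomb s) f = delta_comb s f.
Proof.
move=> Lf; elim: s => [|p s IHs] /=; first by rewrite /delta_comb big_nil.
change (p.1 *: fyval (fydelta p.2) f + fyval (fycomb s) f = delta_comb (p :: s) f).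
by rewrite IHs fydeltaE // /delta_comb big_cons.
Qed.

Lemma fycomb_dense z (e : R) : 0 < e -> exists s, `|z - fycomb s| <= e.
Proof.
move=> e_gt0; have [s zs] := (fyval_FY z).2 e e_gt0; exists s.
rewrite -lee_fin -gnorm_fyval (gnorm_eq_on_Lip0 (g2 := fun f => fyval z f - delta_comb s f)) //.
by move=> f Lf; rewrite fyvalB fycombE.
Qed.

End Deltas.

Section RateOfConvergence.
Variables (R : realType) (V : normedModType R).

Definition cauchy_rate (u : nat -> V) (r : nat -> R) :=
  forall n m, (n <= m)%N -> `|u n - u m| <= r n.

Lemma cauchy_rate_lim_dist (u : nat -> V) r l : cauchy_rate u r -> u @ \oo --> l ->
  forall n, `|u n - l| <= r n.
Proof.
move=> ur ul n; have dist_cvg : `|u n - u m| @[m --> \oo] --> `|u n - l|.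
  by apply: cvg_norm; apply: cvgB => //; apply: cvg_cst.
have near_le : \forall m \near \oo, `|u n - u m| <= r n by exists n => // m /= /ur.
exact: (closed_cvg [set x : R | x <= r n] (@closed_le _ (r n)) near_le _ dist_cvg).
Qed.

End RateOfConvergence.

Lemma cauchy_rate_cvg (R : realType) (V : completeNormedModType R) (u : nat -> V) r :
  cauchy_rate u r -> r @ \oo --> 0 -> cvg (u @ \oo).
Proof.
move=> ur r0; apply: cauchy_cvg; apply/cauchy_exP => e e_gt0.
have [N _ rN] := cvgr0_norm_lt r r0 _ e_gt0.
exists (u N); exists N => // m /= Nm; rewrite -ball_normE /ball_ /=.
by apply: le_lt_trans (ur N m Nm) (le_lt_trans (ler_norm _) (rN N (leqnn N))).
Qed.

Section Completeness.
Variables (R : realType) (X : normedModType R) (Y : completeNormedModType R).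
Implicit Types (f : X -> Y) (z : FYspace X Y).

Section Limit.
Variables (zs : nat -> FYspace X Y) (r : nat -> R).
Hypotheses (zs_rate : cauchy_rate zs r) (r_cvg0 : r @ \oo --> 0).

Lemma fyval_cauchy_rate f : Lip0 f ->
  cauchy_rate (fun n => fyval (zs n) f) (fun n => r n * lipconst f).
Proof.
move=> Lf n m nm; apply: le_trans (fyval_dist _ _ Lf) _.
by apply: ler_wpM2r; [exact: lipconst_ge0 | exact: zs_rate].
Qed.

Lemma fyval_cvg f : cvg (fyval (zs n) f @[n --> \oo]).
Proof.
have [Lf|nLf] := pselect (Lip0 f); last first.
  rewrite (_ : (fun n => fyval (zs n) f) = fun=> 0); first exact: is_cvg_cst.
  by apply: funext => n; rewrite fyval_out.
apply: (cauchy_rate_cvg (fyval_cauchy_rate Lf)).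
by rewrite -(mul0r (lipconst f)); apply: cvgMr_tmp.
Qed.

Definition fylim_fun : (X -> Y) -> Y := fun f => lim (fyval (zs n) f @[n --> \oo]).

Lemma rate_ge0 n : 0 <= r n.
Proof. by apply: le_trans (zs_rate (leqnn n)); rewrite normr_ge0. Qed.

Lemma fylim_gnorm n : (gnorm (fun f => (fylim_fun f - fyval (zs n) f)%R) <= (r n)%:E)%E.
Proof.
apply/gnorm_le; first exact: rate_ge0.
move=> f Lf lipf; rewrite distrC.
have fyval_lim : fyval (zs m) f @[m --> \oo] --> fylim_fun f by apply: fyval_cvg.
apply: le_trans (cauchy_rate_lim_dist (fyval_cauchy_rate Lf) fyval_lim n) _.
by apply: ler_piMr; [exact: rate_ge0 | rewrite -lee_fin -Lip0_lipcE].
Qed.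

Lemma fylim_lin : lin_on_Lip0 fylim_fun.
Proof.
move=> a f1 f2 Lf1 Lf2; apply: cvg_lim => //.
rewrite (_ : (fun n => _) = fun n => a *: fyval (zs n) f1 + fyval (zs n) f2).
  by apply: cvgD; [apply: cvgZl_tmp|]; apply: fyval_cvg.
by apply: funext => n; rewrite fyval_lin.
Qed.

Lemma FY_rep_fylim : fylim_fun \in @FY_rep_pred R X Y.
Proof.
apply/asboolP; split; last first.
  move=> f nLf; rewrite /fylim_fun (_ : (fun n => _) = fun=> 0) ?lim_cst //.
  by apply: funext => n; rewrite fyval_out.
apply: FY_of_approx.
  split; first exact: fylim_lin.
  rewrite (_ : fylim_fun = fun f => 1 *: (fylim_fun f - fyval (zs 0) f) + fyval (zs 0) f).
    apply: le_lt_trans (ltry (`|1| * r 0 + `|zs 0|)).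
    by apply: gnorm_comb (fylim_gnorm 0) _; rewrite ?rate_ge0 ?gnorm_fyval.
  by apply: funext => f; rewrite scale1r subrK.
move=> e e_gt0; have [N _ rN] := cvgr0_norm_lt r r_cvg0 _ e_gt0.
exists (fyval (zs N)); first exact: fyval_FY.
apply: le_trans (fylim_gnorm N) _.
by rewrite lee_fin (le_trans (ler_norm _)) // ltW // rN /=.
Qed.

Definition fylim : FYspace X Y := FYSpace FY_rep_fylim.

Lemma fylim_dist n : `|fylim - zs n| <= r n.
Proof. by rewrite -lee_fin -gnorm_fyval; apply: fylim_gnorm. Qed.

End Limit.

Lemma FYspace_complete (F : set_system (FYspace X Y)) : ProperFilter F -> cauchy F -> cvg F.
Proof.
move=> F_proper /cauchyP F_cauchy.
have [zs Fzs] : {zs : nat -> FYspace X Y & forall n, F (ball (zs n) (harmonic n))}.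
  exact: (choice (fun n => F_cauchy _ (harmonic_gt0 n))).
have harmonic_le n m : (n <= m)%N -> harmonic m <= harmonic n :> R.
  by move=> nm; rewrite /= lef_pV2 ?posrE ?ltr0Sn // ler_nat ltnS.
have zs_rate : cauchy_rate zs (fun n => 2 * harmonic n).
  move=> n m nm; have [w [wn wm]] := filter_ex (filterI (Fzs n) (Fzs m)).
  rewrite -!ball_normE /ball_ /= in wn wm.
  apply: le_trans (ler_distD w _ _) _; rewrite (distrC w) -[2]/(1 + 1) mulrDl mul1r.
  exact/ltW/ltrD/(lt_le_trans wm (harmonic_le n m nm)).
have r_cvg0 : (fun n => 2 * harmonic n) @ \oo --> (0 : R).
  by rewrite -(mulr0 2); apply: cvgMl_tmp; apply: cvg_harmonic.
apply: (cvgP (fylim zs_rate r_cvg0)); apply/cvg_ballP => e e_gt0.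
have [N _ rN] := cvgr0_norm_lt _ r_cvg0 (e / 2) (divr_gt0 e_gt0 (ltr0Sn _ 1)).
apply: filterS (Fzs N) => w; rewrite -!ball_normE /ball_ /= => Nw.
apply: le_lt_trans (ler_distD (zs N) _ _) _.
apply: le_lt_trans (lerD (fylim_dist zs_rate r_cvg0 N) (ltW Nw)) _.
have rN_lt : 2 * harmonic N < e / 2 := le_lt_trans (ler_norm _) (rN N (leqnn N)).
rewrite [ltRHS]splitr; apply: ltrD rN_lt (le_lt_trans _ rN_lt).
by rewrite -[leLHS]mul1r ler_wpM2r ?harmonic_ge0 // ler1n.
Qed.

End Completeness.

HB.instance Definition _ (R : realType) (X : normedModType R) (Y : completeNormedModType R) :=
  Uniform_isComplete.Build (FYspace X Y) (@FYspace_complete R X Y).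

Section Operators.
Variables (R : realType) (Z W : normedModType R).

Lemma linear_on_setT0 (U : Z -> W) : linear_on setT U -> U 0 = 0.
Proof.
move=> Ulin; have := Ulin 1 0 0 I I; rewrite !scale1r !addr0 => U00.
by apply: (addrI (U 0)); rewrite addr0 -U00.
Qed.

Lemma linear_on_setTB (U : Z -> W) z1 z2 : linear_on setT U -> U (z1 - z2) = U z1 - U z2.
Proof. by move=> Ulin; rewrite addrC -scaleN1r Ulin // scaleN1r addrC. Qed.

Lemma opnorm_on_setT_bound (U : Z -> W) (N : R) : linear_on setT U ->
  (opnorm_on setT U <= N%:E)%E -> forall z, `|U z| <= N * `|z|.
Proof.
move=> Ulin UN z; apply: ler_homogeneous_bound => // c c_gt0 cz.
have := Ulin c z 0 I I; rewrite addr0 linear_on_setT0 // addr0 => Ucz.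
rewrite -lee_fin -(gtr0_norm c_gt0) -normrZ -Ucz; apply: le_trans UN.
apply: le_ereal_sup_tmp; eexists => //; right; exists (c *: z) => //.
by split => //=; rewrite normrZ gtr0_norm.
Qed.

End Operators.

Section BoundedOperatorsOnFYspace.
Variables (R : realType) (X Y : normedModType R).
Variables (U : FYspace X Y -> Y) (N : R).
Hypotheses (N_ge0 : 0 <= N) (U_lin : linear_on setT U) (U_bound : forall z, `|U z| <= N * `|z|).

Definition op_on_deltas (x : X) : Y := U (fydelta Y x).

Lemma op_on_deltas_lipschitz : N.-lipschitz op_on_deltas.
Proof.
apply/lipschitzP => x y; rewrite /op_on_deltas -linear_on_setTB //.
by apply: le_trans (U_bound _) _; apply: ler_wpM2l => //; apply: fydelta_dist.
Qed.

Lemma Lip0_op_on_deltas : Lip0 op_on_deltas.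
Proof.
apply: Lip0_of_lipschitz N_ge0 _ op_on_deltas_lipschitz.
by rewrite /op_on_deltas fydelta0 linear_on_setT0.
Qed.

Lemma lipc_op_on_deltas : (lipc op_on_deltas <= N%:E)%E.
Proof. exact/lipc_le/op_on_deltas_lipschitz. Qed.

Lemma op_fycombE s : U (fycomb Y s) = delta_comb s op_on_deltas.
Proof.
elim: s => [|p s IHs] /=; first by rewrite linear_on_setT0 // /delta_comb big_nil.
by rewrite U_lin // IHs /delta_comb big_cons.
Qed.

Lemma op_evalE z : U z = fyval z op_on_deltas.
Proof.
apply/eqP; rewrite -subr_eq0 -normr_le0; apply: (@le0_of_le_scaled _ _ (N + N)) => e e_gt0.
have [s zs] := fycomb_dense z e_gt0.
have U_close : `|U z - U (fycomb Y s)| <= N * e.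
  by rewrite -linear_on_setTB //; apply: le_trans (U_bound _) _; apply: ler_wpM2l.
have fyval_close : `|fyval (fycomb Y s) op_on_deltas - fyval z op_on_deltas| <= e * N.
  have lipconst_le : lipconst op_on_deltas <= N.
    by rewrite -lee_fin -(Lip0_lipcE Lip0_op_on_deltas) lipc_op_on_deltas.
  apply: le_trans (fyval_dist _ _ Lip0_op_on_deltas) _; rewrite distrC.
  by apply: ler_pM => //; apply: lipconst_ge0.
have -> : U z - fyval z op_on_deltas =
    (U z - U (fycomb Y s)) + (fyval (fycomb Y s) op_on_deltas - fyval z op_on_deltas).
  by rewrite op_fycombE -fycombE ?addrA ?subrK //; apply: Lip0_op_on_deltas.
apply: le_trans (ler_normD _ _) _; apply: le_trans (lerD U_close fyval_close) _.
by rewrite mulrDl [e * N]mulrC.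
Qed.

End BoundedOperatorsOnFYspace.

Section OperatorsOnD.
Variables (R : realType) (X : normedModType R) (Y : completeNormedModType R).
Variables (D : set ((X -> Y) -> Y)) (T : ((X -> Y) -> Y) -> Y).
Hypotheses (D_sub : closed_subspace_FY D) (T_LD : in_LD D T).

Let DFY : D `<=` @FY R X Y := D_sub.1.
Let D0 : D (fun _ => 0) := D_sub.2.1.
Let Dcomb : forall (a : R) g1 g2, D g1 -> D g2 -> D (fun f => a *: g1 f + g2 f) := D_sub.2.2.1.
Let Dclosed := D_sub.2.2.2.
Let T_lin := T_LD.1.

Definition LDnormr : R := fine (LDnorm D T).

Lemma LDnormE : LDnorm D T = LDnormr%:E.
Proof.
have LD_ge0 : (0 <= LDnorm D T)%E by apply: le_ereal_sup_tmp; exists 0%E => //; left.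
by rewrite fineK // ge0_fin_numE //; case: T_LD.
Qed.

Lemma LDnormr_ge0 : 0 <= LDnormr.
Proof. by rewrite -lee_fin -LDnormE; apply: le_ereal_sup_tmp; exists 0%E => //; left. Qed.

Lemma LDnorm_ub g : D g -> (gnorm g <= 1)%E -> `|T g| <= LDnormr.
Proof.
move=> Dg g_le1; rewrite -lee_fin -LDnormE.
by apply: le_ereal_sup_tmp; eexists => //; right; exists g.
Qed.

Lemma in_LD_cst0 : T (fun _ => 0) = 0.
Proof.
rewrite -[RHS](addNr (T (fun _ => 0))) -scaleN1r -T_lin //.
by congr T; apply: funext => f; rewrite scaler0 addr0.
Qed.

Lemma in_LD_bound g : D g -> `|T g| <= LDnormr * gnormr g.
Proof.
move=> Dg; apply: ler_homogeneous_bound; first exact: gnormr_ge0.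
move=> c c_gt0 cg; have := LDnorm_ub (Dcomb c Dg D0).
rewrite T_lin // in_LD_cst0 addr0 normrZ gtr0_norm //; apply.
apply: le_trans (gnorm_comb c (gnormr_ge0 g) (lexx 0) _ _) _.
- by rewrite -gnormE //; case: (DFY Dg) => -[].
- by rewrite gnorm_cst0.
- by rewrite addr0 gtr0_norm.
Qed.

Lemma in_LD_eq_on_Lip0 g1 g2 : D g1 -> D g2 ->
  (forall f, Lip0 f -> g1 f = g2 f) -> T g1 = T g2.
Proof.
move=> Dg1 Dg2 g12; apply/eqP; rewrite -subr_eq0 -normr_le0 addrC -scaleN1r -T_lin //.
apply: le_trans (in_LD_bound (Dcomb (-1) Dg2 Dg1)) _.
rewrite /gnormr (gnorm_eq_on_Lip0 (g2 := fun _ => 0)); last first.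
  by move=> f Lf; rewrite g12 // scaleN1r addNr.
by rewrite gnorm_cst0 mulr0.
Qed.

Lemma D_restrict_Lip0 g : D g -> D (restrict_Lip0 g).
Proof.
move=> Dg; have FYg := DFY Dg; apply: Dclosed.
  by apply: FY_eq_on_Lip0 FYg _ => f Lf; rewrite restrict_Lip0_in.
move=> e e_gt0; exists g; split => //; apply/gnorm_le; first exact: ltW.
by move=> f Lf _; rewrite restrict_Lip0_in // subrr normr0 ltW.
Qed.

Definition D_in_FYspace : set (FYspace X Y) := [set z | D (fyval z)].

Lemma lin_subspace_D_in_FYspace : lin_subspace D_in_FYspace.
Proof. by split; [exact: D0 | move=> a z1 z2; apply: Dcomb]. Qed.

Lemma closed_D_in_FYspace : closed D_in_FYspace.
Proof.
move=> z z_cl; apply: Dclosed; first exact: fyval_FY.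
move=> e e_gt0; have [w [Dw zw]] := z_cl _ (nbhsx_ballx z e e_gt0).
exists (fyval w); split => //.
by rewrite -[X in gnorm X]/(fyval (z - w)) gnorm_fyval lee_fin ltW // -ball_normE.
Qed.

Lemma linear_on_D_in_FYspace : linear_on D_in_FYspace (T \o @fyval R X Y).
Proof. by move=> a z1 z2; apply: T_lin. Qed.

Lemma opnorm_on_D_le : (opnorm_on D_in_FYspace (T \o @fyval R X Y) <= LDnormr%:E)%E.
Proof.
apply: ge_ereal_sup => _ [->|[z [Dz z_le1] <-]]; first by rewrite lee_fin LDnormr_ge0.
by rewrite lee_fin LDnorm_ub // gnorm_fyval lee_fin.
Qed.

Lemma in_LD_represented_by_eval : injective_space Y ->
  exists f, Lip0 f /\ (lipc f <= LDnorm D T)%E /\ forall g, D g -> T g = g f.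
Proof.
move=> Y_inj.
have [U [U_lin [UT U_norm]]] := Y_inj _ _ lin_subspace_D_in_FYspace closed_D_in_FYspace
  _ linear_on_D_in_FYspace (le_lt_trans opnorm_on_D_le (ltry _)).
have U_bound : forall z, `|U z| <= LDnormr * `|z|.
  by apply: opnorm_on_setT_bound U_lin _; rewrite U_norm opnorm_on_D_le.
have LU := Lip0_op_on_deltas LDnormr_ge0 U_lin U_bound.
exists (op_on_deltas U); split => //.
split; first by rewrite LDnormE; apply: lipc_op_on_deltas LDnormr_ge0 U_lin U_bound.
move=> g Dg; have FYg := DFY Dg.
rewrite (in_LD_eq_on_Lip0 Dg (D_restrict_Lip0 Dg)); last by move=> f Lf; rewrite restrict_Lip0_in.
have -> : T (restrict_Lip0 g) = U (fyrepr FYg) by rewrite UT //; apply: D_restrict_Lip0.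
by rewrite (op_evalE LDnormr_ge0 U_lin U_bound) fyreprE.
Qed.

End OperatorsOnD.

Section EvaluationMap.
Variables (R : realType) (X : normedModType R) (Y : completeNormedModType R).
Variable D : set ((X -> Y) -> Y).
Implicit Types f : X -> Y.

Lemma LDnorm_eval_le_lipc f : D `<=` @FY R X Y -> Lip0 f ->
  (LDnorm D (fun g => g f) <= lipc f)%E.
Proof.
move=> DFY Lf; rewrite (Lip0_lipcE Lf).
apply: ge_ereal_sup => _ [->|[g [Dg g_le1] <-]]; first by rewrite lee_fin lipconst_ge0.
rewrite lee_fin -[lipconst f]mul1r.
exact: gnorm_lipschitz_bound (FY_lin (DFY _ Dg)) g_le1 Lf (lipconst_ge0 f) (Lip0_lipschitz Lf).
Qed.

Lemma in_LD_eval f : D `<=` @FY R X Y -> Lip0 f -> in_LD D (fun g => g f).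
Proof.
move=> DFY Lf; split => //.
by apply: le_lt_trans (LDnorm_eval_le_lipc DFY Lf) _; rewrite Lip0_lipcE ?ltry.
Qed.

Lemma LDnorm_eval_le_qnorm f : D `<=` @FY R X Y -> Lip0 f ->
  (LDnorm D (fun g => g f) <= qnorm D f)%E.
Proof.
move=> DFY Lf; apply: le_ereal_inf_tmp => _ [h [Lh h_ann] <-].
have Lfh := Lip0B Lf Lh; apply: le_trans (LDnorm_eval_le_lipc DFY Lfh).
apply: ge_ereal_sup => _ [->|[g [Dg g_le1] <-]].
  by apply: le_ereal_sup_tmp; exists 0%E => //; left.
have glin := FY_lin (DFY _ Dg).
have -> : g f = g (fun x => f x - h x) by rewrite lin_on_Lip0B // h_ann // subr0.
by apply: le_ereal_sup_tmp; eexists => //; right; exists g.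
Qed.

Lemma qnorm_le_LDnorm_eval f : injective_space Y -> closed_subspace_FY D -> Lip0 f ->
  (qnorm D f <= LDnorm D (fun g => g f))%E.
Proof.
move=> Y_inj D_sub Lf.
have [f' [Lf' [lipf' f'E]]] := in_LD_represented_by_eval D_sub (in_LD_eval D_sub.1 Lf) Y_inj.
apply: ge_ereal_inf; exists (lipc f') => //; exists (fun x => f x - f' x).
  split; first exact: Lip0B.
  move=> g Dg; have glin := FY_lin (D_sub.1 _ Dg).
  by rewrite lin_on_Lip0B // -f'E // subrr.
by congr lipc; apply: funext => x; rewrite opprB addrCA subrr addr0.
Qed.

End EvaluationMap.

Theorem mainTheorem13 (R : realType) (X Y : completeNormedModType R)
  (D : set ((X -> Y) -> Y)) :
  injective_space Y -> closed_subspace_FY D ->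
  (* the map Phi : f |-> (gamma |-> gamma f) is well defined on the quotient,
     injective on it, and linear *)
  (forall f1 f2 : X -> Y, Lip0 f1 -> Lip0 f2 ->
     ((forall g, D g -> g f1 = g f2) <-> preannih D (fun x => f1 x - f2 x))) /\
  (forall (a : R) (f1 f2 : X -> Y), Lip0 f1 -> Lip0 f2 -> forall g, D g ->
     g (fun x => a *: f1 x + f2 x) = a *: g f1 + g f2) /\
  (* Phi(f) lies in L(D,Y) and is isometric for the quotient norm *)
  (forall f : X -> Y, Lip0 f ->
     in_LD D (fun g => g f) /\ LDnorm D (fun g => g f) = qnorm D f) /\
  (* Phi is onto L(D,Y) *)
  (forall T : ((X -> Y) -> Y) -> Y, in_LD D T ->
     exists f : X -> Y, Lip0 f /\ forall g, D g -> T g = g f).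
Proof.
move=> Y_inj D_sub; have DFY := D_sub.1.
have D_lin g : D g -> lin_on_Lip0 g by move/DFY/FY_lin.
split.
  move=> f1 f2 Lf1 Lf2; split.
    move=> f12; split; first exact: Lip0B.
    by move=> g Dg; rewrite lin_on_Lip0B ?f12 ?subrr //; apply: D_lin.
  move=> [_ f12_ann] g Dg; apply/eqP.
  by rewrite -subr_eq0 -(lin_on_Lip0B (D_lin g Dg) Lf1 Lf2) f12_ann.
split; first by move=> a f1 f2 Lf1 Lf2 g /D_lin; apply.
split.
  move=> f Lf; split; first exact: in_LD_eval.
  by apply/eqP; rewrite eq_le LDnorm_eval_le_qnorm ?qnorm_le_LDnorm_eval.
move=> T T_LD; have [f [Lf [_ Tf]]] := in_LD_represented_by_eval D_sub T_LD Y_inj.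
by exists f.
Qed.
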